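(* For every integer $n\ge 1$, let \[V'_n=\{t_{3i+1}t_{3i+3}-t_{3i+2}t_{3n+1} : i=0,\dots,n-1\},\] \[V''_n=\{t_{3i+1}t_{3i+3}t_{3j+2}-t_{3j+1}t_{3j+3}t_{3i+2} : 0\le i<j\le n-1\}.\] Then $V_n=V'_n\cup V''_n$ is the universal Gröbner basis of the toric ideal $I_{P(2_n)}$.
   Context: Let $e_k\in\mathbb{R}^{2n+1}$ be standard basis vectors and let $M_n$ be the $(2n+1)\times(3n+1)$ matrix with columns $m_{3i+1}=e_{2i+1}+e_{2n+1}$, $m_{3i+2}=e_{2i+1}+e_{2i+2}+e_{2n+1}$, $m_{3i+3}=e_{2i+2}+e_{2n+1}$ for $i=0,\dots,n-1$, and $m_{3n+1}=e_{2n+1}$ (these are the nonzero codewords of the code $P(2_n)$). The toric ideal $I_{P(2_n)}$ is the kernel of $\mathbb{C}[t_1,\dots,t_{3n+1}]\to\mathbb{C}[x_1,\dots,x_{2n+1}]$, $t_k\mapsto x^{m_k}$. The universal Gröbner basis of an ideal is the union of its reduced Gröbner bases over all monomial orders. *)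

From mathcomp Require Import all_boot all_algebra.
From mathcomp Require Import Rstruct complex.
From mathcomp Require Import mpoly.
From Stdlib Require Import Reals.

Set Implicit Arguments.
Unset Strict Implicit.
Unset Printing Implicit Defensive.

Import GRing.Theory.
Local Open Scope ring_scope.

Definition C : fieldType := (Rdefinitions.R)[i].

Record monomial_order (k : nat) := MonomialOrder {
  mo_le :> rel 'X_{1..k};
  mo_refl : reflexive mo_le;
  mo_antisym : antisymmetric mo_le;
  mo_trans : transitive mo_le;
  mo_total : total mo_le;
  mo_mul : forall a b c, mo_le a b -> mo_le (a + c)%MM (b + c)%MM;
  mo_zero : forall a, mo_le 0%MM a
}.

Section Groebner.
Variables (F : fieldType) (k : nat).

Definition lead_mon (ord : monomial_order k) (p : {mpoly F[k]}) (m : 'X_{1..k}) :=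
  m \in msupp p /\ forall m', m' \in msupp p -> ord m' m.

Definition is_reduced_GB (ord : monomial_order k) (I : pred {mpoly F[k]})
    (G : seq {mpoly F[k]}) :=
  [/\ forall g, g \in G -> I g,
      forall g, g \in G -> exists2 mg, lead_mon ord g mg & g@_mg = 1,
      forall f, I f -> f != 0 -> exists g, g \in G /\
          exists mg mf, [/\ lead_mon ord g mg, lead_mon ord f mf & (mg <= mf)%MM]
    & forall g g', g \in G -> g' \in G -> g' != g ->
          forall mg', lead_mon ord g' mg' ->
          forall m, m \in msupp g -> ~~ (mg' <= m)%MM ].

Definition in_universal_GB (I : pred {mpoly F[k]}) (g : {mpoly F[k]}) :=
  exists (ord : monomial_order k) (G : seq {mpoly F[k]}),
    is_reduced_GB ord I G /\ g \in G.

End Groebner.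

(* standard basis vector e_{l+1} of N^{2n+1} (0-based index l) *)
Definition ebv (n l : nat) : 'X_{1..(2 * n).+1} :=
  [multinom (i == l :> nat : nat) | i < (2 * n).+1].

(* column m_{j+1} of M_n (0-based index j, 0 <= j <= 3n):
   m_{3i+1} = e_{2i+1} + e_{2n+1}, m_{3i+2} = e_{2i+1} + e_{2i+2} + e_{2n+1},
   m_{3i+3} = e_{2i+2} + e_{2n+1}, m_{3n+1} = e_{2n+1}. *)
Definition colM (n j : nat) : 'X_{1..(2 * n).+1} :=
  if ltn j (muln 3 n) then
    let i := divn j 3 in
    match modn j 3 with
    | 0 => (ebv n (2 * i)%nat + ebv n (2 * n)%nat)%MM
    | 1 => (ebv n (2 * i)%nat + ebv n (2 * i).+1%nat + ebv n (2 * n)%nat)%MM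
    | _ => (ebv n (2 * i).+1%nat + ebv n (2 * n)%nat)%MM
    end
  else ebv n (2 * n)%nat.

(* The toric ideal I_{P(2_n)}: kernel of C[t_1..t_{3n+1}] -> C[x_1..x_{2n+1}],
   t_k |-> x^{m_k}. *)
Definition toric_ideal (n : nat) : pred {mpoly C[(3 * n).+1]} :=
  fun p => comp_mpoly [tuple 'X_[colM n k] | k < (3 * n).+1] p == 0.

(* the variable t_k, 1 <= k <= 3n+1 *)
Definition tv (n k : nat) : {mpoly C[(3 * n).+1]} := 'X_(inord k.-1).

Definition Vp (n i : nat) : {mpoly C[(3 * n).+1]} :=
  tv n (3 * i + 1)%nat * tv n (3 * i + 3)%nat - tv n (3 * i + 2)%nat * tv n (3 * n + 1)%nat.

Definition Vpp (n i j : nat) : {mpoly C[(3 * n).+1]} :=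
  tv n (3 * i + 1)%nat * tv n (3 * i + 3)%nat * tv n (3 * j + 2)%nat
  - tv n (3 * j + 1)%nat * tv n (3 * j + 3)%nat * tv n (3 * i + 2)%nat.

Definition inV (n : nat) (v : {mpoly C[(3 * n).+1]}) : Prop :=
  (exists2 i, (i < n)%nat & v = Vp n i) \/
  (exists i j, (i < j < n)%nat /\ v = Vpp n i j).

Arguments toric_ideal n : clear implicits.
Arguments inV n v : clear implicits.

(* Let phi be the monomial map of M_n, so that the toric ideal is spanned by the
   binomials t^u - t^w with phi u = phi w.  For any monomial order, an element of
   the reduced Groebner basis of a toric ideal is a binomial t^u - t^w whose leading
   monomial u is minimal non-standard and whose other monomial w lies below u in the
   fibre of u; conversely these binomials form the reduced basis once w is
   determined by u.  A minimal non-standard u and such a w have disjoint supports,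
   since a common factor could be cancelled.  For P(2_n) the fibre of phi is cut out
   by the block sums u_{3j} + u_{3j+1}, u_{3j+1} + u_{3j+2} and the degree, so
   disjointness forces every block of (u, w) to be ((0,b,0), (b,0,b)) or its swap;
   the degree balance then exhibits a binomial of V_n (up to sign) dividing
   t^u - t^w term by term, and minimality of u makes them equal.  Conversely,
   weight orders favouring t_{3n+1} and t_{3j+2} turn each element of V_n, up to
   sign, into such a binomial. *)

From mathcomp Require Import all_boot all_order all_algebra.
From mathcomp Require Import mpoly zify.
From Stdlib Require Import Classical ClassicalEpsilon.

Set Implicit Arguments.
Unset Strict Implicit.
Unset Printing Implicit Defensive.

Import Order.TTheory GRing.Theory.

Section MultinomialDivisibility.
Variable k : nat.
Implicit Types a b : 'X_{1..k}.

Lemma lepm_anti a b : (a <= b)%MM -> (b <= a)%MM -> a = b.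
Proof.
move=> /mnm_lepP ab /mnm_lepP ba; apply/mnmP => i.
by apply/eqP; rewrite eqn_leq ab ba.
Qed.

Lemma mdeg_lepm a b : (a <= b)%MM -> mdeg a <= mdeg b.
Proof. by move=> ab; rewrite -(submK ab) mdegD leq_addl. Qed.

Lemma lepm_mdeg_lt a b : (a <= b)%MM -> a != b -> mdeg a < mdeg b.
Proof.
move=> ab neq_ab; have deg_b : mdeg b = mdeg (b - a)%MM + mdeg a by rewrite -mdegD submK.
suff : mdeg (b - a)%MM != 0 by rewrite deg_b; lia.
by rewrite mdeg_eq0; apply: contraNneq neq_ab => ba0; rewrite -(submK ab) ba0 add0m.
Qed.

End MultinomialDivisibility.

Section MonomialOrderFacts.
Variables (k : nat) (ord : monomial_order k).
Implicit Types a b c : 'X_{1..k}.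

Lemma mo_anti a b : ord a b -> ord b a -> a = b.
Proof. by move=> ab ba; apply: (@mo_antisym k ord); rewrite ab ba. Qed.

Lemma mo_ltW a b : ~~ ord a b -> ord b a.
Proof. by case/orP: (mo_total ord a b) => [->|]. Qed.

Lemma mo_lt_neq a b : ~~ ord a b -> b != a.
Proof. by apply: contraNneq => ->; rewrite mo_refl. Qed.

Lemma mo_lepm a b : (a <= b)%MM -> ord a b.
Proof. by move=> ab; have := mo_mul a (mo_zero ord (b - a)%MM); rewrite add0m submK. Qed.

Lemma mo_add2r a b c : ord (a + c)%MM (b + c)%MM = ord a b.
Proof.
apply/idP/idP; last exact: mo_mul.
move=> acbc; apply/negPn/negP => /[dup] nab /mo_ltW ba.
have /addIm ab_eq := mo_anti acbc (mo_mul c ba).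
by rewrite ab_eq mo_refl in nab.
Qed.

Lemma mo_add2l a b c : ord (c + a)%MM (c + b)%MM = ord a b.
Proof. by rewrite ![(c + _)%MM]addmC mo_add2r. Qed.

Variable F : fieldType.
Local Open Scope ring_scope.
Implicit Types p : {mpoly F[k]}.

Lemma lead_mon_uniq p a b : lead_mon ord p a -> lead_mon ord p b -> a = b.
Proof. by move=> [pa max_a] [pb max_b]; apply: mo_anti; [apply: max_b | apply: max_a]. Qed.

Lemma lead_mon_exists p : p != 0 -> exists m, lead_mon ord p m.
Proof.
rewrite -msupp_eq0 /lead_mon; elim: (msupp p) => [|a s IH] //= _.
have [->|/IH [m [sm max_m]]] := eqVneq s [::].
  by exists a; split=> [|b]; rewrite ?mem_head // inE => /eqP ->; rewrite mo_refl.
have [am|ma] := orP (mo_total ord a m).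
  by exists m; split=> [|b]; rewrite !inE ?sm ?orbT // => /orP [/eqP ->|/max_m].
exists a; split=> [|b]; rewrite ?mem_head // inE => /orP [/eqP ->|/max_m bm].
  exact: mo_refl.
exact: mo_trans bm ma.
Qed.

Lemma msupp_binomial a b m : m \in msupp ('X_[a] - 'X_[b] : {mpoly F[k]}) -> m = a \/ m = b.
Proof.
rewrite mcoeff_msupp mcoeffB !mcoeffX.
by have [->|_] := eqVneq a m; have [->|_] := eqVneq b m; rewrite ?subrr ?eqxx; auto.
Qed.

Lemma lead_mon_binomial a b : ~~ ord a b ->
  lead_mon ord ('X_[a] - 'X_[b] : {mpoly F[k]}) a /\ ('X_[a] - 'X_[b] : {mpoly F[k]})@_a = 1.
Proof.
move=> nab; have coef_a : ('X_[a] - 'X_[b] : {mpoly F[k]})@_a = 1.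
  by rewrite mcoeffB !mcoeffX eqxx (negbTE (mo_lt_neq nab)) subr0.
split=> //; split; first by rewrite mcoeff_msupp coef_a oner_neq0.
by move=> m /msupp_binomial [->|->]; [apply: mo_refl | apply: mo_ltW].
Qed.

End MonomialOrderFacts.

(** * Toric ideals and their reduced Groebner bases *)

Lemma msupp2_mpolyE (R : nzRingType) k (p : {mpoly R[k]}) a b :
  perm_eq (msupp p) [:: a; b] -> p = (p@_a *: 'X_[a] + p@_b *: 'X_[b])%R.
Proof. by move=> supp_p; rewrite {1}(mpolyE p) (perm_big _ supp_p) !big_cons big_nil /= addr0. Qed.

Lemma exists_filter_seq (T : eqType) (P : T -> Prop) (s : seq T) :
  exists s' : seq T, forall x, x \in s' <-> x \in s /\ P x.
Proof.
exists [seq x <- s | if excluded_middle_informative (P x) then true else false] => x.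
by rewrite mem_filter; case: excluded_middle_informative => Px /=; [tauto | split=> // [[]]].
Qed.

Section ToricIdeal.
Variables (F : fieldType) (k l : nat) (A : 'I_k -> 'X_{1..l}).
Local Open Scope ring_scope.
Implicit Types (u w m : 'X_{1..k}) (p : {mpoly F[k]}).

Definition toric_exp m : 'X_{1..l} := (\sum_(i < k) A i *+ m i)%MM.

Definition toric_pred : pred {mpoly F[k]} :=
  fun p => comp_mpoly [tuple 'X_[A i] | i < k] p == 0.

Local Notation phi := toric_exp.

Lemma toric_expD : {morph phi : a b / (a + b)%MM}.
Proof.
move=> a b; apply/mnmP => t; rewrite mnmDE /toric_exp !mnm_sumE -big_split /=.
by apply: eq_bigr => i _; rewrite !mulmnE mnmDE mulnDr.
Qed.

Lemma toric_exp0 : phi 0%MM = 0%MM.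
Proof. by apply/mnmP => t; rewrite mnm_sumE mnm0E big1 // => i _; rewrite mulmnE mnm0E muln0. Qed.

Lemma toric_exp_U i : phi U_(i)%MM = A i.
Proof.
apply/mnmP => t; rewrite mnm_sumE (bigD1 i) //= mulmnE mnm1E eqxx muln1 big1 ?addn0 //.
by move=> j ne_ji; rewrite mulmnE mnm1E eq_sym (negbTE ne_ji) muln0.
Qed.

Lemma toric_exp_eq0 : (forall i, A i != 0%MM) -> forall m, phi m = 0%MM -> m = 0%MM.
Proof.
move=> A_neq0 m /(congr1 mdeg); rewrite mdeg_sum mdeg0 => /eqP.
rewrite sum_nat_eq0 => /forallP m0; apply/mnmP => i; apply/eqP.
by move: (m0 i); rewrite mdegMn muln_eq0 mdeg_eq0 (negbTE (A_neq0 i)) mnm0E.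
Qed.

Lemma comp_mpoly_toric m :
  comp_mpoly [tuple 'X_[A i] | i < k] ('X_[m] : {mpoly F[k]}) = 'X_[phi m].
Proof. by rewrite comp_mpolyX; under eq_bigr do rewrite tnth_mktuple; rewrite mprodXnE. Qed.

Lemma toric_fiber_sum p e : toric_pred p -> \sum_(m <- msupp p | phi m == e) p@_m = 0.
Proof.
move=> /eqP tp; rewrite -[RHS](mcoeff0 _ e) -tp comp_mpolyEX raddf_sum big_mkcond /=.
apply: eq_bigr => m _; rewrite comp_mpoly_toric mcoeffZ mcoeffX.
by case: eqP; rewrite ?mulr1 ?mulr0.
Qed.

Lemma toric_binomial u w : phi u = phi w -> toric_pred ('X_[u] - 'X_[w]).
Proof. by move=> e; rewrite /toric_pred comp_mpolyB !comp_mpoly_toric e subrr. Qed.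

Lemma toric_fiber_partner p m0 : toric_pred p -> m0 \in msupp p ->
  exists m, [/\ m \in msupp p, m != m0 & phi m = phi m0].
Proof.
move=> tp pm0; apply: NNPP => no_partner.
move/eqP: (toric_fiber_sum (phi m0) tp); apply/negP.
rewrite big_mkcond (bigD1_seq m0) ?msupp_uniq //= eqxx big1_seq ?addr0 -?mcoeff_msupp //.
by move=> m /andP [ne pm]; case: eqP => // e; case: no_partner; exists m.
Qed.

Section StandardMonomials.
Variable ord : monomial_order k.

Definition standard u := forall w, phi w = phi u -> ord u w.

Definition min_nonstandard u :=
  ~ standard u /\ forall v, (v <= u)%MM -> v != u -> standard v.

Definition min_pair u w := [/\ min_nonstandard u, phi w = phi u & ~~ ord u w].

Definition min_binomial p := exists u w, p = 'X_[u] - 'X_[w] /\ min_pair u w.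

Lemma nonstandardP u : ~ standard u <-> exists w, phi w = phi u /\ ~~ ord u w.
Proof.
split=> [nsu|[w [e nuw]] su]; last by rewrite su in nuw.
apply: NNPP => none; apply: nsu => w e; apply/negPn/negP => nuw.
by apply: none; exists w.
Qed.

Lemma standard_fiber_eq u w : standard u -> standard w -> phi u = phi w -> u = w.
Proof. by move=> su sw e; apply: mo_anti; [apply: su | apply: sw]. Qed.

Lemma nonstandard_lepm u m : ~ standard u -> (u <= m)%MM -> ~ standard m.
Proof.
move=> /nonstandardP [w [e nuw]] um sm; move/negP: nuw; apply.
rewrite -(mo_add2r _ u w (m - u)%MM) [(u + _)%MM]addmC submK //.
by apply: sm; rewrite toric_expD e -toric_expD addmC submK.
Qed.

Lemma exists_min_nonstandard m : ~ standard m -> exists2 u, (u <= m)%MM & min_nonstandard u.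
Proof.
have [d] := ubnP (mdeg m); elim: d m => // d IH m deg_m nsm.
have [[v [vm neq nsv]]|none] := classic (exists v, [/\ (v <= m)%MM, v != m & ~ standard v]).
  have [|u uv min_u] := IH v _ nsv; first by have := lepm_mdeg_lt vm neq; lia.
  by exists u => //; apply: lepm_trans uv vm.
exists m; first exact: lepm_refl.
by split=> // v vm neq; apply: NNPP => nsv; apply: none; exists v.
Qed.

Hypothesis A_neq0 : forall i, A i != 0%MM.

Lemma min_pair_split u w u1 w1 : min_pair u w -> (u1 <= u)%MM -> (w1 <= w)%MM ->
  phi u1 = phi w1 -> u1 != 0%MM -> u = u1 /\ w = w1.
Proof.
move=> [[_ min_u] e nuw] u1u w1w e1 nz1.
set u2 := (u - u1)%MM; set w2 := (w - w1)%MM.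
have e2 : phi u2 = phi w2.
  by apply: (@addIm _ (phi u1)); rewrite {2}e1 -!toric_expD !submK // e.
have [u2_0|nz2] := eqVneq u2 0%MM.
  have -> : u = u1 by rewrite -(submK u1u) -/u2 u2_0 add0m.
  suff w2_0 : w2 = 0%MM by rewrite -(submK w1w) -/w2 w2_0 add0m.
  by apply: toric_exp_eq0 => //; rewrite -e2 u2_0 toric_exp0.
(* Otherwise u1 and u - u1 are proper factors of u, hence standard, and adding the
   two comparisons gives ord u w. *)
have ord1 : ord u1 w1.
  suff neq : u1 != u by apply: min_u _ u1u neq _ (esym e1).
  apply: contra_neq nz2 => u1_eq; apply: (@addIm _ u1).
  by rewrite add0m {1}/u2 submK // u1_eq.
have ord2 : ord u2 w2.
  suff neq : u2 != u by apply: min_u _ (lem_subr _ _) neq _ (esym e2).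
  apply: contra_neq nz1 => u2_eq; apply: (@addmI _ u2).
  by rewrite addm0 {1}/u2 submK // u2_eq.
move/negP: nuw; case; rewrite -(submK u1u) -(submK w1w) -/u2 -/w2.
by apply: (mo_trans (y := (u2 + w1)%MM)); rewrite ?mo_add2l ?mo_add2r.
Qed.

Lemma min_pair_disjoint u w : min_pair u w -> forall i, u i = 0%N \/ w i = 0%N.
Proof.
move=> hp i; case: (posnP (u i)) => [|ui]; first by left.
case: (posnP (w i)) => [|wi]; first by right.
have U_le m : (0 < m i)%N -> (U_(i) <= m)%MM.
  by move=> mi; apply/mnm_lepP => j; rewrite mnm1E; case: eqP => // <-.
have [|eu ew] := min_pair_split hp (U_le _ ui) (U_le _ wi) erefl.
  by rewrite -mdeg_eq0 mdeg1.
by case: hp => _ _; rewrite eu ew mo_refl.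
Qed.

Lemma lead_mon_nonstandard f mf : toric_pred f -> lead_mon ord f mf -> ~ standard mf.
Proof.
move=> tf [fmf max_mf] smf; have [m [fm neq e]] := toric_fiber_partner tf fmf.
by move: neq; rewrite (mo_anti (max_mf m fm) (smf m e)) eqxx.
Qed.

Lemma min_binomial_lead_lepm f : toric_pred f -> f != 0 ->
  exists2 x, min_binomial x &
    exists mx mf, [/\ lead_mon ord x mx, lead_mon ord f mf & (mx <= mf)%MM].
Proof.
move=> tf /(lead_mon_exists ord) [mf lead_f].
have [u umf min_u] := exists_min_nonstandard (lead_mon_nonstandard tf lead_f).
have [w [e nuw]] := iffLR (nonstandardP u) min_u.1.
exists ('X_[u] - 'X_[w]); first by exists u, w; split.
by exists u, mf; split=> //; case: (lead_mon_binomial F nuw).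
Qed.

Section ReducedGB.
Variables (G : seq {mpoly F[k]}) (g : {mpoly F[k]}) (mg : 'X_{1..k}).
Hypotheses (GB : is_reduced_GB ord toric_pred G) (Gg : g \in G) (lead_g : lead_mon ord g mg).

Lemma reduced_GB_lead_lepm m : ~ standard m ->
  exists2 g', g' \in G & exists2 mg', lead_mon ord g' mg' & (mg' <= m)%MM.
Proof.
case: GB => _ _ GB_lead _ /nonstandardP [w [e nmw]].
have [lead_b coef_b] := lead_mon_binomial F nmw.
have b_neq0 : ('X_[m] - 'X_[w] : {mpoly F[k]}) != 0.
  by rewrite -msupp_eq0; apply/eqP => supp0; move: lead_b.1; rewrite supp0.
have [g' [Gg' [mg' [mf [lead_g' lead_f le]]]]] := GB_lead _ (toric_binomial (esym e)) b_neq0.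
by exists g' => //; exists mg' => //; rewrite -(lead_mon_uniq lead_f lead_b).
Qed.

Lemma reduced_GB_lead_lepm_eq g' mg' m : g' \in G -> lead_mon ord g' mg' ->
  m \in msupp g -> (mg' <= m)%MM -> g' = g /\ mg' = mg.
Proof.
move=> Gg' lead_g' gm le; have [eq_g|neq_g] := eqVneq g' g.
  by split=> //; apply: (lead_mon_uniq lead_g'); rewrite eq_g.
by case: GB => _ _ _ /(_ g g' Gg Gg' neq_g mg' lead_g' m gm); rewrite le.
Qed.

Lemma reduced_GB_standard_tail m : m \in msupp g -> m != mg -> standard m.
Proof.
move=> gm neq; apply: NNPP => /reduced_GB_lead_lepm [g' Gg' [mg' lead_g' le]].
have [_ eq_mg] := reduced_GB_lead_lepm_eq Gg' lead_g' gm le; rewrite eq_mg in le.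
by move: neq; rewrite (mo_anti (lead_g.2 m gm) (mo_lepm ord le)) eqxx.
Qed.

Lemma reduced_GB_lead_min_nonstandard : min_nonstandard mg.
Proof.
have tg : toric_pred g by case: GB => GB_I _ _ _; apply: GB_I.
split=> [|v vmg neq]; first exact: lead_mon_nonstandard tg lead_g.
apply: NNPP => /reduced_GB_lead_lepm [g' Gg' [mg' lead_g' le]].
have [_ eq_mg] := reduced_GB_lead_lepm_eq Gg' lead_g' lead_g.1 (lepm_trans le vmg).
by rewrite eq_mg in le; move: neq; rewrite (lepm_anti vmg le) eqxx.
Qed.

Lemma reduced_GB_min_binomial : min_binomial g.
Proof.
have tg : toric_pred g by case: GB => GB_I _ _ _; apply: GB_I.
have [w [gw neq e]] := toric_fiber_partner tg lead_g.1.
have nmgw : ~~ ord mg w.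
  by apply: contra neq => mgw; rewrite (mo_anti (lead_g.2 w gw) mgw).
have sw := reduced_GB_standard_tail gw neq.
have supp_g : perm_eq (msupp g) [:: mg; w].
  apply: uniq_perm; [exact: msupp_uniq | by rewrite /= inE eq_sym neq | move=> m].
  rewrite !inE; apply/idP/orP => [gm|[]/eqP-> //]; last exact: lead_g.1.
  have [->|neq_m] := eqVneq m mg; [by left | right].
  have [m' [gm' neq' e']] := toric_fiber_partner tg gm.
  have sm := reduced_GB_standard_tail gm neq_m.
  have [eq_m'|neq_m'] := eqVneq m' mg.
    by apply/eqP; apply: standard_fiber_eq sm sw _; rewrite -e' eq_m' e.
  have := standard_fiber_eq (reduced_GB_standard_tail gm' neq_m') sm e'.
  by move/eqP; rewrite (negbTE neq').
have coef_mg : g@_mg = 1.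
  by case: GB => _ /(_ g Gg) [mg' lead_g'] <-; rewrite (lead_mon_uniq lead_g lead_g').
have coef_w : g@_w = -1.
  have := toric_fiber_sum (phi mg) tg.
  rewrite (perm_big _ supp_g) !big_cons big_nil /= eqxx e eqxx addr0 coef_mg => fiber.
  by apply/eqP; rewrite -addr_eq0 addrC fiber.
exists mg, w; split; last by split=> //; apply: reduced_GB_lead_min_nonstandard.
by rewrite {1}(msupp2_mpolyE supp_g) coef_mg coef_w scale1r scaleN1r.
Qed.

End ReducedGB.

(* In general w must be taken standard; when the partner of a minimal non-standard
   monomial is unique, as for P(2_n), no well-foundedness of [ord] is needed. *)
Section MinBinomialGB.
Hypothesis min_pair_uniq : forall u w1 w2, min_pair u w1 -> min_pair u w2 -> w1 = w2.

Lemma min_pair_partner_standard u w : min_pair u w -> standard w.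
Proof.
move=> [min_u e nuw] w' e'; apply/negPn/negP => nww'.
have nuw' : ~~ ord u w' by apply: contra nuw => uw'; apply: mo_trans uw' (mo_ltW nww').
have ww' := min_pair_uniq (And3 min_u e nuw) (And3 min_u (etrans e' e) nuw').
by move: (mo_lt_neq nww'); rewrite ww' eqxx.
Qed.

Lemma min_binomials_reduced_GB G :
  (forall x, x \in G <-> min_binomial x) -> is_reduced_GB ord toric_pred G.
Proof.
move=> GP; split.
- by move=> _ /GP [u [w [-> [_ e _]]]]; apply: toric_binomial.
- by move=> _ /GP [u [w [-> [_ _ nuw]]]]; exists u; case: (lead_mon_binomial F nuw).
- by move=> f tf nzf; have [x /GP Gx lead] := min_binomial_lead_lepm tf nzf; exists x.
move=> _ _ /GP [u [w [-> puw]]] /GP [u' [w' [-> [[nsu' _] e' nuw']]]] neq mg' lead' m.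
rewrite (lead_mon_uniq lead' (lead_mon_binomial F nuw').1).
case: (puw) => [[nsu min_u] _ _] /msupp_binomial [->|->]; apply/negP => le.
  have [eq_u|neq_u] := eqVneq u' u; last exact: nsu' (min_u _ le neq_u).
  rewrite eq_u in e' nuw' neq.
  have eq_w := min_pair_uniq puw (And3 (conj nsu min_u) e' nuw').
  by move/eqP: neq; rewrite eq_w.
exact: nonstandard_lepm nsu' le (min_pair_partner_standard puw).
Qed.

Variable s : seq {mpoly F[k]}.
Hypothesis min_binomial_s : forall x, min_binomial x -> x \in s.

Lemma min_binomial_in_universal_GB x : min_binomial x -> in_universal_GB toric_pred x.
Proof.
have [G GP] := exists_filter_seq min_binomial s.
have GP' y : y \in G <-> min_binomial y.
  by split=> [/GP [] //|my]; apply/GP; split=> //; apply: min_binomial_s.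
by move=> mx; exists ord, G; split; [apply: min_binomials_reduced_GB | apply/GP'].
Qed.

End MinBinomialGB.

End StandardMonomials.
End ToricIdeal.

(** * Weight orders *)

Section WeightOrder.
Variables (k : nat) (wt : 'X_{1..k} -> nat).
Hypothesis wtD : {morph wt : a b / (a + b)%MM >-> (a + b)%N}.
Implicit Types a b c : 'X_{1..k}.

Definition weight_le a b := (wt a < wt b) || (wt a == wt b) && (a <= b)%O.

Lemma weight_le_refl : reflexive weight_le.
Proof. by move=> a; rewrite /weight_le eqxx lexx orbT. Qed.

Lemma weight_le_anti : antisymmetric weight_le.
Proof. by move=> a b; rewrite /weight_le; case: ltngtP => //= _ /le_anti. Qed.

Lemma weight_le_trans : transitive weight_le.
Proof.
move=> b a c; rewrite /weight_le.
case: ltngtP => // [ab _|/eqP ab /= le_ab]; case: ltngtP => // [bc _|/eqP bc /= le_bc].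
- by rewrite (ltn_trans ab bc).
- by rewrite -(eqP bc) ab.
- by rewrite (eqP ab) bc.
- by rewrite (eqP ab) (eqP bc) eqxx (le_trans le_ab le_bc) orbT.
Qed.

Lemma weight_le_total : total weight_le.
Proof. by move=> a b; rewrite /weight_le; case: ltngtP => //= _; apply: le_total. Qed.

Lemma weight_le_add2r a b c : weight_le a b -> weight_le (a + c)%MM (b + c)%MM.
Proof. by rewrite /weight_le !wtD ltn_add2r eqn_add2r lemc_add2l. Qed.

Lemma weight_le0m a : weight_le 0%MM a.
Proof.
have wt0 : wt 0%MM = 0 by apply/eqP; rewrite -(eqn_add2l (wt 0%MM)) -wtD addm0 addn0.
by rewrite /weight_le wt0 le0m andbT orbC -leq_eqVlt.
Qed.

Definition weight_order : monomial_order k := MonomialOrder weight_le_refl weight_le_anti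
  weight_le_trans weight_le_total weight_le_add2r weight_le0m.

Lemma weight_order_lt a b : wt a < wt b -> weight_order a b.
Proof. by rewrite /= /weight_le => ->. Qed.

Lemma weight_order_gt a b : wt b < wt a -> ~~ weight_order a b.
Proof. by rewrite /= /weight_le; case: ltngtP. Qed.

End WeightOrder.

(** * The code P(2_n) *)

(* Coordinates are 0-based: [mnm_at m p] is the exponent of t_{p+1} (or x_{p+1}). *)
Definition mnm_at s (m : 'X_{1..s.+1}) (p : nat) : nat := m (inord p).

Lemma mnm_atD s (a b : 'X_{1..s.+1}) p : mnm_at (a + b)%MM p = mnm_at a p + mnm_at b p.
Proof. by rewrite /mnm_at mnmDE. Qed.

Lemma mnm_at_U s p q : p < s.+1 -> q < s.+1 ->
  mnm_at (U_(inord p) : 'X_{1..s.+1})%MM q = (q == p).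
Proof. by move=> hp hq; rewrite /mnm_at mnm1E -(inj_eq val_inj) /= !inordK // eq_sym. Qed.

Lemma mnm_at_ebv n a l : l < (2 * n).+1 -> mnm_at (ebv n a) l = (l == a).
Proof. by move=> hl; rewrite /mnm_at mnmE inordK. Qed.

Lemma mnmP_at s (a b : 'X_{1..s.+1}) :
  (forall t, t < s.+1 -> mnm_at a t = mnm_at b t) -> a = b.
Proof.
by move=> eq_ab; apply/mnmP => i; have := eq_ab i (ltn_ord i); rewrite /mnm_at inord_val.
Qed.

Lemma lepm_atP s (a b : 'X_{1..s.+1}) :
  reflect (forall t, t < s.+1 -> mnm_at a t <= mnm_at b t) (a <= b)%MM.
Proof.
apply: (iffP mnm_lepP) => [le_ab t ht|le_ab i]; first exact: le_ab.
by have := le_ab i (ltn_ord i); rewrite /mnm_at inord_val.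
Qed.

Lemma sum_ord_delta N (f : 'I_N.+1 -> nat) p : p < N.+1 ->
  \sum_(i < N.+1) (i == p :> nat) * f i = f (inord p).
Proof.
move=> hp; rewrite (bigD1 (inord p)) //= inordK // eqxx mul1n big1 ?addn0 // => i.
by rewrite -(inj_eq val_inj) /= inordK // => /negbTE ->.
Qed.

Lemma sum_nat_blocks3 N (f : nat -> nat) :
  \sum_(0 <= i < 3 * N) f i = \sum_(0 <= j < N) (f (3 * j) + f (3 * j + 1) + f (3 * j + 2)).
Proof.
elim: N => [|N IH]; first by rewrite !big_geq.
rewrite [RHS]big_nat_recr //= -IH (_ : 3 * N.+1 = (3 * N).+3); last lia.
by rewrite !big_nat_recr //= !addn1 !addn2 !addnA.
Qed.

Lemma sum_nat_range_gt0P N (f : nat -> nat) :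
  reflect (exists2 j, j < N & 0 < f j) (0 < \sum_(0 <= j < N) f j).
Proof.
rewrite lt0n sum_nat_seq_neq0; apply: (iffP hasP) => [[j]|[j hj fj]].
  by rewrite mem_index_iota => /andP [_ hj] fj; exists j; rewrite // lt0n.
by exists j; rewrite /= ?mem_index_iota -?lt0n.
Qed.

Lemma sum_nat_range_eq0 N (f : nat -> nat) :
  \sum_(0 <= j < N) f j = 0 -> forall j, j < N -> f j = 0.
Proof.
move=> sum0 j hj; case: (posnP (f j)) => // fj.
by have := introT (sum_nat_range_gt0P N f) (ex_intro2 _ _ j hj fj); rewrite sum0.
Qed.

Section CodeP2n.
Variable n : nat.
Local Notation k := (3 * n).+1.
Local Notation mono := 'X_{1..k}.
Local Notation colA := (fun i : 'I_k => colM n i).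
Local Notation phi := (toric_exp colA).
Implicit Types (u w m : mono).

Lemma ltn_blocks t : t < k ->
  t = 3 * n \/ exists2 j, j < n & [\/ t = 3 * j, t = 3 * j + 1 | t = 3 * j + 2].
Proof.
move=> ht; have [->|neq] := eqVneq t (3 * n); [by left | right; exists (t %/ 3); first lia].
have := divn_eq t 3; have := ltn_pmod t (isT : 0 < 3).
by case: (t %% 3) => [|[|[|r]]] //= _ e; [apply: Or31 | apply: Or32 | apply: Or33]; lia.
Qed.

Lemma colM_block j : j < n ->
  [/\ colM n (3 * j) = (ebv n (2 * j) + ebv n (2 * n))%MM,
      colM n (3 * j + 1) = (ebv n (2 * j) + ebv n (2 * j).+1 + ebv n (2 * n))%MM &
      colM n (3 * j + 2) = (ebv n (2 * j).+1 + ebv n (2 * n))%MM].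
Proof.
move=> hj; have in_range r : r < 3 -> ltn (3 * j + r) (3 * n) = true.
  by move=> hr; apply/idP; change (3 * j + r < 3 * n); lia.
rewrite /colM -{1 2 3}[3 * j]addn0 !in_range // [3 * j]mulnC !modnMDl !divnMDl //.
by rewrite addn0.
Qed.

Lemma colM_last : colM n (3 * n) = ebv n (2 * n).
Proof. by rewrite /colM (_ : ltn (3 * n) (3 * n) = false) //; apply: ltnn. Qed.

Lemma colM_even i j : i < k -> j < n ->
  mnm_at (colM n i) (2 * j) = (i == 3 * j) + (i == 3 * j + 1).
Proof.
move=> hi hj; case: (ltn_blocks hi) => [->|[j' hj' eq_i]].
  by rewrite colM_last mnm_at_ebv //; lia.
have [c0 c1 c2] := colM_block hj'.
by case: eq_i => ->; rewrite ?c0 ?c1 ?c2 !mnm_atD !mnm_at_ebv //; lia.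
Qed.

Lemma colM_odd i j : i < k -> j < n ->
  mnm_at (colM n i) (2 * j).+1 = (i == 3 * j + 1) + (i == 3 * j + 2).
Proof.
move=> hi hj; case: (ltn_blocks hi) => [->|[j' hj' eq_i]].
  by rewrite colM_last mnm_at_ebv //; lia.
have [c0 c1 c2] := colM_block hj'.
by case: eq_i => ->; rewrite ?c0 ?c1 ?c2 !mnm_atD !mnm_at_ebv //; lia.
Qed.

Lemma colM_top i : i < k -> mnm_at (colM n i) (2 * n) = 1.
Proof.
move=> hi; case: (ltn_blocks hi) => [->|[j' hj' eq_i]].
  by rewrite colM_last mnm_at_ebv ?eqxx.
have [c0 c1 c2] := colM_block hj'.
by case: eq_i => ->; rewrite ?c0 ?c1 ?c2 !mnm_atD !mnm_at_ebv //; lia.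
Qed.

Lemma colM_neq0 (i : 'I_k) : colM n i != 0%MM.
Proof. by apply: contra_eqN (colM_top (ltn_ord i)) => /eqP ->; rewrite /mnm_at mnm0E. Qed.

Lemma P2_exp_at m l : mnm_at (phi m) l = \sum_(i < k) mnm_at (colM n i) l * m i.
Proof. by rewrite /mnm_at mnm_sumE; apply: eq_bigr => i _; rewrite mulmnE. Qed.

Lemma P2_exp_even m j : j < n ->
  mnm_at (phi m) (2 * j) = mnm_at m (3 * j) + mnm_at m (3 * j + 1).
Proof.
move=> hj; rewrite P2_exp_at; under eq_bigr => i _ do rewrite colM_even // mulnDl.
by rewrite big_split /= !sum_ord_delta //; lia.
Qed.

Lemma P2_exp_odd m j : j < n ->
  mnm_at (phi m) (2 * j).+1 = mnm_at m (3 * j + 1) + mnm_at m (3 * j + 2).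
Proof.
move=> hj; rewrite P2_exp_at; under eq_bigr => i _ do rewrite colM_odd // mulnDl.
by rewrite big_split /= !sum_ord_delta //; lia.
Qed.

Lemma P2_exp_top m : mnm_at (phi m) (2 * n) = mdeg m.
Proof. by rewrite P2_exp_at mdegE; apply: eq_bigr => i _; rewrite colM_top // mul1n. Qed.

Lemma P2_fiberP u w : phi u = phi w <->
  (forall j, j < n ->
     mnm_at u (3 * j) + mnm_at u (3 * j + 1) = mnm_at w (3 * j) + mnm_at w (3 * j + 1) /\
     mnm_at u (3 * j + 1) + mnm_at u (3 * j + 2) = mnm_at w (3 * j + 1) + mnm_at w (3 * j + 2))
  /\ mdeg u = mdeg w.
Proof.
split=> [e|[blocks deg]].
  by split=> [j hj|]; rewrite -?P2_exp_even -?P2_exp_odd -?P2_exp_top ?e.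
apply: mnmP_at => t ht; have [->|neq] := eqVneq t (2 * n); first by rewrite !P2_exp_top.
have [j hj [->|->]] : exists2 j, j < n & t = 2 * j \/ t = (2 * j).+1.
  exists (t %/ 2); first lia.
  have := divn_eq t 2; have := ltn_pmod t (isT : 0 < 2).
  by case: (t %% 2) => [|[|r]] //= _ e; [left | right]; lia.
  by rewrite !P2_exp_even //; case: (blocks j hj).
by rewrite !P2_exp_odd //; case: (blocks j hj).
Qed.

Lemma mdeg_blocks m : mdeg m =
  \sum_(0 <= j < n) (mnm_at m (3 * j) + mnm_at m (3 * j + 1) + mnm_at m (3 * j + 2))
  + mnm_at m (3 * n).
Proof.
rewrite mdegE -sum_nat_blocks3 -big_nat_recr //= big_mkord.
by apply: eq_bigr => i _; rewrite /mnm_at inord_val.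
Qed.

Lemma mnm_eq_blocks u w :
  (forall j, j < n -> [/\ mnm_at u (3 * j) = mnm_at w (3 * j),
     mnm_at u (3 * j + 1) = mnm_at w (3 * j + 1) & mnm_at u (3 * j + 2) = mnm_at w (3 * j + 2)]) ->
  mnm_at u (3 * n) = mnm_at w (3 * n) -> u = w.
Proof.
move=> blocks top; apply: mnmP_at => t ht; case: (ltn_blocks ht) => [->//|[j hj eq_t]].
by have [ea eb ec] := blocks j hj; case: eq_t => ->.
Qed.

Definition mA j : mono := (U_(inord (3 * j)) + U_(inord (3 * j + 2)))%MM.
Definition mB j : mono := (U_(inord (3 * j + 1)) + U_(inord (3 * n)))%MM.
Definition mT i j : mono := (mA i + U_(inord (3 * j + 1)))%MM.

Lemma mnm_at_mA j t : j < n -> t < k -> mnm_at (mA j) t = (t == 3 * j) + (t == 3 * j + 2).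
Proof. by move=> hj ht; rewrite mnm_atD !mnm_at_U //; lia. Qed.

Lemma mnm_at_mB j t : j < n -> t < k -> mnm_at (mB j) t = (t == 3 * j + 1) + (t == 3 * n).
Proof. by move=> hj ht; rewrite mnm_atD !mnm_at_U //; lia. Qed.

Lemma mnm_at_mT i j t : i < n -> j < n -> t < k ->
  mnm_at (mT i j) t = (t == 3 * i) + (t == 3 * i + 2) + (t == 3 * j + 1).
Proof. by move=> hi hj ht; rewrite mnm_atD mnm_at_mA // mnm_at_U //; lia. Qed.

Lemma mdeg_mA j : mdeg (mA j) = 2.
Proof. by rewrite mdegD !mdeg1. Qed.

Lemma mdeg_mB j : mdeg (mB j) = 2.
Proof. by rewrite mdegD !mdeg1. Qed.

Lemma mdeg_mT i j : mdeg (mT i j) = 3.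
Proof. by rewrite mdegD mdeg_mA mdeg1. Qed.

Lemma P2_exp_U p : p < k -> phi U_(inord p)%MM = colM n p.
Proof. by move=> hp; rewrite toric_exp_U inordK. Qed.

Lemma P2_exp_mAB j : j < n -> phi (mA j) = phi (mB j).
Proof.
move=> hj; have [c0 c1 c2] := colM_block hj.
rewrite !toric_expD !P2_exp_U ?c0 ?c1 ?c2 ?colM_last; try lia.
by apply/mnmP => t; rewrite !mnmDE; lia.
Qed.

Lemma P2_exp_mT i j : i < n -> j < n -> phi (mT i j) = phi (mT j i).
Proof.
move=> hi hj; have [ci0 ci1 ci2] := colM_block hi; have [cj0 cj1 cj2] := colM_block hj.
rewrite !toric_expD !P2_exp_U ?ci0 ?ci1 ?ci2 ?cj0 ?cj1 ?cj2; try lia.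
by apply/mnmP => t; rewrite !mnmDE; lia.
Qed.

Lemma lepm_mA m j :
  j < n -> 0 < mnm_at m (3 * j) -> 0 < mnm_at m (3 * j + 2) -> (mA j <= m)%MM.
Proof.
move=> hj ha hc; apply/lepm_atP => t ht; rewrite mnm_at_mA //.
by case: (eqVneq t (3 * j)) => [->|]; [|case: (eqVneq t (3 * j + 2)) => [->|]]; lia.
Qed.

Lemma lepm_mB m j :
  j < n -> 0 < mnm_at m (3 * j + 1) -> 0 < mnm_at m (3 * n) -> (mB j <= m)%MM.
Proof.
move=> hj hb hz; apply/lepm_atP => t ht; rewrite mnm_at_mB //.
by case: (eqVneq t (3 * j + 1)) => [->|]; [|case: (eqVneq t (3 * n)) => [->|]]; lia.
Qed.

Lemma lepm_mT m i j : i < n -> j < n -> i != j -> 0 < mnm_at m (3 * i) ->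
  0 < mnm_at m (3 * i + 2) -> 0 < mnm_at m (3 * j + 1) -> (mT i j <= m)%MM.
Proof.
move=> hi hj neq ha hc hb; apply/lepm_atP => t ht; rewrite mnm_at_mT //.
case: (eqVneq t (3 * i)) => [->|]; [|case: (eqVneq t (3 * i + 2)) => [->|]]; try lia.
by case: (eqVneq t (3 * j + 1)) => [->|]; lia.
Qed.

Lemma Vp_binomial j : Vp n j = ('X_[mA j] - 'X_[mB j])%R.
Proof. by rewrite /Vp /tv /mA /mB !mpolyXD !(addn1, addn2, addn3). Qed.

Lemma Vpp_binomial i j : Vpp n i j = ('X_[mT i j] - 'X_[mT j i])%R.
Proof. by rewrite /Vpp /tv /mT /mA !mpolyXD !(addn1, addn2, addn3). Qed.

Definition V_pair u w := (exists2 j, j < n & u = mA j /\ w = mB j) \/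
  (exists i j, i < j < n /\ u = mT i j /\ w = mT j i).

Lemma V_pair_inV u w : V_pair u w -> inV n ('X_[u] - 'X_[w])%R.
Proof.
case=> [[j hj [-> ->]]|[i [j [hij [-> ->]]]]]; first by left; exists j; rewrite ?Vp_binomial.
by right; exists i, j; rewrite Vpp_binomial.
Qed.

Lemma V_pair_mdeg u w : V_pair u w -> 2 <= mdeg u /\ 2 <= mdeg w.
Proof.
by case=> [[j _ [-> ->]]|[i [j [_ [-> ->]]]]]; [rewrite mdeg_mA mdeg_mB | rewrite !mdeg_mT].
Qed.

Definition V_binomials : seq {mpoly C[k]} :=
  ([seq 'X_[mA j] - 'X_[mB j] | j <- iota 0 n] ++ [seq 'X_[mB j] - 'X_[mA j] | j <- iota 0 n] ++
   [seq 'X_[mT i j] - 'X_[mT j i] | i <- iota 0 n, j <- iota 0 n])%R.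

Lemma V_pair_binomials u w : V_pair u w \/ V_pair w u -> ('X_[u] - 'X_[w])%R \in V_binomials.
Proof.
have iota_n j : j < n -> j \in iota 0 n by rewrite mem_iota.
rewrite !mem_cat => - [] [[j /iota_n hj [-> ->]]|
  [i [j [/andP [hij /[dup] /iota_n hj hjn] [-> ->]]]]].
- by rewrite (map_f (fun j => 'X_[mA j] - 'X_[mB j])%R).
- have hi := iota_n i (ltn_trans hij hjn).
  by rewrite (allpairs_f (fun i j => 'X_[mT i j] - 'X_[mT j i])%R) ?orbT.
- by rewrite (map_f (fun j => 'X_[mB j] - 'X_[mA j])%R) ?orbT.
- have hi := iota_n i (ltn_trans hij hjn).
  by rewrite (allpairs_f (fun i j => 'X_[mT i j] - 'X_[mT j i])%R) ?orbT.
Qed.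

Section MinPairs.
Variable ord : monomial_order k.
Local Notation min_pair := (min_pair colA ord).

Lemma min_pair_block u w j : min_pair u w -> j < n ->
  [/\ mnm_at w (3 * j) = mnm_at u (3 * j + 1), mnm_at w (3 * j + 1) = mnm_at u (3 * j),
      mnm_at w (3 * j + 2) = mnm_at u (3 * j + 1), mnm_at u (3 * j + 2) = mnm_at u (3 * j)
    & mnm_at u (3 * j) = 0 \/ mnm_at u (3 * j + 1) = 0].
Proof.
move=> puw hj; have [_ e _] := puw; have [blocks _] := iffLR (P2_fiberP w u) e.
have disj p : mnm_at u p = 0 \/ mnm_at w p = 0 := min_pair_disjoint colM_neq0 puw (inord p).
have [sum_ab sum_bc] := blocks j hj.
by have := disj (3 * j); have := disj (3 * j + 1); have := disj (3 * j + 2); split; lia.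
Qed.

Lemma min_pair_balance u w : min_pair u w ->
  \sum_(0 <= j < n) mnm_at u (3 * j) + mnm_at u (3 * n) =
  \sum_(0 <= j < n) mnm_at u (3 * j + 1) + mnm_at w (3 * n).
Proof.
move=> puw; have [_ e _] := puw; have [_ deg] := iffLR (P2_fiberP w u) e.
pose a m j := mnm_at m (3 * j); pose b m j := mnm_at m (3 * j + 1).
have blocks_w : \sum_(0 <= j < n) (a w j + b w j + mnm_at w (3 * j + 2)) =
    \sum_(0 <= j < n) (a u j + b u j) + \sum_(0 <= j < n) b u j.
  rewrite -big_split; apply: eq_big_nat => j /andP [_ hj] /=.
  by case: (min_pair_block puw hj); rewrite /a /b; lia.
have blocks_u : \sum_(0 <= j < n) (a u j + b u j + mnm_at u (3 * j + 2)) =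
    \sum_(0 <= j < n) (a u j + b u j) + \sum_(0 <= j < n) a u j.
  rewrite -big_split; apply: eq_big_nat => j /andP [_ hj] /=.
  by case: (min_pair_block puw hj); rewrite /a /b; lia.
rewrite /a /b in blocks_w blocks_u.
by move: deg; rewrite !mdeg_blocks blocks_w blocks_u; lia.
Qed.

Lemma min_pair_classification u w : min_pair u w -> V_pair u w \/ V_pair w u.
Proof.
move=> puw; have blocks := min_pair_block puw; have bal := min_pair_balance puw.
have split_at u1 w1 : (u1 <= u)%MM -> (w1 <= w)%MM -> phi u1 = phi w1 -> 0 < mdeg u1 ->
    u = u1 /\ w = w1.
  move=> u1u w1w e1 deg1; apply: (min_pair_split colM_neq0 puw u1u w1w e1).
  by rewrite -mdeg_eq0 -lt0n.
case: (posnP (\sum_(0 <= j < n) mnm_at u (3 * j))) =>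
  [A0|/[dup] Apos /sum_nat_range_gt0P [i hi ai]];
case: (posnP (\sum_(0 <= j < n) mnm_at u (3 * j + 1))) =>
  [B0|/[dup] Bpos /sum_nat_range_gt0P [j hj bj]].
- have A0j := sum_nat_range_eq0 A0; have B0j := sum_nat_range_eq0 B0.
  have [_ _ nuw] := puw; suff eq_uw : u = w by rewrite eq_uw mo_refl in nuw.
  apply: esym; apply: mnm_eq_blocks => [j hj|]; last lia.
  by case: (blocks j hj); have := A0j j hj; have := B0j j hj; split; lia.
- have [wa _ wc _ _] := blocks j hj.
  have [-> ->] := split_at _ _ (lepm_mB hj bj ltac:(lia))
    (lepm_mA (m := w) hj ltac:(lia) ltac:(lia)) (esym (P2_exp_mAB hj)) ltac:(by rewrite mdeg_mB).
  by right; left; exists j.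
- have [_ wb _ uc _] := blocks i hi.
  have [-> ->] := split_at _ _ (lepm_mA hi ai ltac:(lia))
    (lepm_mB (m := w) hi ltac:(lia) ltac:(lia)) (P2_exp_mAB hi) ltac:(by rewrite mdeg_mA).
  by left; left; exists i.
have [wa _ wc _ _] := blocks j hj; have [_ wb _ uc ab] := blocks i hi.
have neq : i != j by apply: contraTneq bj => eq_ij; rewrite -eq_ij; lia.
have [-> ->] := split_at _ _ (lepm_mT hi hj neq ai ltac:(lia) bj)
  (lepm_mT (m := w) hj hi ltac:(by rewrite eq_sym) ltac:(lia) ltac:(lia) ltac:(lia))
  (P2_exp_mT hi hj) ltac:(by rewrite mdeg_mT).
case: (ltngtP i j) => [lt_ij|lt_ji|eq_ij]; last by rewrite eq_ij eqxx in neq.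
  by left; right; exists i, j; rewrite lt_ij.
by right; right; exists j, i; rewrite lt_ji.
Qed.

Lemma min_pair_uniq u w1 w2 : min_pair u w1 -> min_pair u w2 -> w1 = w2.
Proof.
move=> p1 p2; have [_ e1 _] := p1; have [_ e2 _] := p2.
have blocks j : j < n -> [/\ mnm_at w1 (3 * j) = mnm_at w2 (3 * j),
    mnm_at w1 (3 * j + 1) = mnm_at w2 (3 * j + 1) &
    mnm_at w1 (3 * j + 2) = mnm_at w2 (3 * j + 2)].
  by move=> hj; case: (min_pair_block p1 hj); case: (min_pair_block p2 hj); split; lia.
apply: mnm_eq_blocks => //; have [_] := iffLR (P2_fiberP w1 w2) (etrans e1 (esym e2)).
rewrite !mdeg_blocks (eq_big_nat _ _ (F2 := fun j =>
  mnm_at w2 (3 * j) + mnm_at w2 (3 * j + 1) + mnm_at w2 (3 * j + 2))) => [|j /andP [_ hj]].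
  by lia.
by case: (blocks j hj) => -> -> ->.
Qed.

Lemma standard_mdeg_lt2 m : mdeg m < 2 -> standard colA ord m.
Proof.
move=> deg; apply: NNPP => /exists_min_nonstandard [u um min_u].
have [w [e nuw]] := iffLR (nonstandardP _ _ u) min_u.1.
have := mdeg_lepm um; case: (min_pair_classification (And3 min_u e nuw)) => /V_pair_mdeg; lia.
Qed.

Lemma min_pair_in_universal_GB u w :
  min_pair u w -> in_universal_GB (toric_ideal n) ('X_[u] - 'X_[w]).
Proof.
move=> puw; apply: (min_binomial_in_universal_GB (@min_pair_uniq) (s := V_binomials)).
  by move=> _ [u' [w' [-> /min_pair_classification]]]; apply: V_pair_binomials.
by exists u, w.
Qed.

End MinPairs.

(* Makes t_{3j+2} t_{3n+1} and t_{3i+1} t_{3i+3} t_{3j+2} the leading monomials. *)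
Definition P2_weight j m := mnm_at m (3 * n) + mnm_at m (3 * j + 1).

Lemma P2_weightD j : {morph P2_weight j : a b / (a + b)%MM >-> (a + b)%N}.
Proof. by move=> a b; rewrite /P2_weight !mnm_atD addnACA. Qed.

Definition P2_order j := weight_order (P2_weightD j).

Lemma P2_weight_mA j l : j < n -> l < n -> P2_weight l (mA j) = 0.
Proof. by move=> hj hl; rewrite /P2_weight !mnm_at_mA; lia. Qed.

Lemma P2_weight_mB j l : j < n -> l < n -> 0 < P2_weight l (mB j).
Proof. by move=> hj hl; rewrite /P2_weight mnm_at_mB // eqxx; lia. Qed.

Lemma P2_weight_mT i j : i < n -> j < n -> i != j ->
  P2_weight j (mT j i) < P2_weight j (mT i j).
Proof. by move=> hi hj neq; rewrite /P2_weight !mnm_at_mT //; lia. Qed.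

Lemma min_pair_P2_order_mB j : j < n -> min_pair colA (P2_order j) (mB j) (mA j).
Proof.
move=> hj; have nuw : ~~ P2_order j (mB j) (mA j).
  by apply: weight_order_gt; rewrite P2_weight_mA // P2_weight_mB.
split=> //; last exact: P2_exp_mAB.
split=> [|v vu neq]; first by apply/nonstandardP; exists (mA j); rewrite P2_exp_mAB.
by apply: standard_mdeg_lt2; have := lepm_mdeg_lt vu neq; rewrite mdeg_mB.
Qed.

Lemma min_pair_P2_order_mT i j : i < j < n -> min_pair colA (P2_order j) (mT i j) (mT j i).
Proof.
case/andP=> lt_ij hj; have hi := ltn_trans lt_ij hj.
have nuw : ~~ P2_order j (mT i j) (mT j i).
  by apply: weight_order_gt; apply: P2_weight_mT; rewrite // neq_ltn lt_ij.
split=> //; last exact: P2_exp_mT.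
split=> [|v vu neq]; first by apply/nonstandardP; exists (mT j i); rewrite P2_exp_mT.
apply: NNPP => /exists_min_nonstandard [u uv min_u].
have [w [e nuw']] := iffLR (nonstandardP _ _ u) min_u.1.
have deg : mdeg u < 3.
  by have := mdeg_lepm uv; have := lepm_mdeg_lt vu neq; rewrite mdeg_mT; lia.
case: (min_pair_classification (And3 min_u e nuw')) =>
  [[[l hl [eu ew]]|[a [b [_ [eu _]]]]]|[[l hl [_ eu]]|[a [b [_ [_ eu]]]]]].
- move/negP: nuw'; apply; rewrite eu ew; apply: weight_order_lt.
  by rewrite P2_weight_mA // P2_weight_mB.
- by rewrite eu mdeg_mT in deg.
- move/lepm_atP/(_ (3 * n) (ltnSn _)): (lepm_trans uv vu).
  by rewrite eu mnm_at_mB ?mnm_at_mT // eqxx; lia.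
- by rewrite eu mdeg_mT in deg.
Qed.

End CodeP2n.

Local Open Scope ring_scope.

Theorem mainTheorem7 (n : nat) (hn : (1 <= n)%N) :
  (forall g : {mpoly C[(3 * n).+1]},
     in_universal_GB (toric_ideal n) g -> exists2 v, inV n v & (g = v \/ g = - v)) /\
  (forall v : {mpoly C[(3 * n).+1]},
     inV n v -> in_universal_GB (toric_ideal n) v \/ in_universal_GB (toric_ideal n) (- v)).
Proof.
split=> [g [ord [G [GB Gg]]]|v].
  have [_ /(_ g Gg) [mg lead_g _] _ _] := GB.
  have [u [w [-> puw]]] := reduced_GB_min_binomial GB Gg lead_g.
  case: (min_pair_classification puw) => /V_pair_inV inV_uw.
    by exists ('X_[u] - 'X_[w]); last left.
  by exists ('X_[w] - 'X_[u]); last by right; rewrite opprB.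
case=> [[j hj ->]|[i [j [hij ->]]]].
  by right; rewrite Vp_binomial opprB; apply: min_pair_in_universal_GB (min_pair_P2_order_mB hj).
by left; rewrite Vpp_binomial; apply: min_pair_in_universal_GB (min_pair_P2_order_mT hij).
Qed.
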